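(* Let $s\in S$. The composition of the inclusion $\mathrm{Der}^S_s\overline A_{H,S}\hookrightarrow\mathrm{Der}^{SS}\overline A_{H,S}$ with the projection $\mathrm{Der}^{SS}\overline A_{H,S}\to\mathrm{ODer}^{SS}\overline A_{H,S}$ is surjective, and its kernel is spanned by the inner derivations $[X_s^n,\,\cdot\,]$, $n\ge0$.
   Context: Let $H$ be a finite-dimensional symplectic $\mathbb Q$-vector space with symplectic basis $\{p_i,q_i\}$ and $S$ a non-empty finite set. $A_{H,S}$ is the free associative algebra on $H\oplus\mathbb Q[S]$ (generators $p_i,q_i$, and $X_t$ for $t\in S$), and $\overline A_{H,S}$ is its quotient by the two-sided ideal generated by $\sum_i[p_i,q_i]+\sum_{t\in S}X_t$ (so $\overline A_{H,S}$ is free on $p_i,q_i$, $X_t$, $t\neq s$). A derivation $\mathcal D$ of $\overline A_{H,S}$ is semi-special if for every $t\in S$ there is $B_t\in\overline A_{H,S}$ with $\mathcal D(X_t)=[B_t,X_t]$; they form a Lie algebra $\mathrm{Der}^{SS}\overline A_{H,S}$ containing all inner derivations $[B,\cdot\,]$. $\mathrm{ODer}^{SS}\overline A_{H,S}$ is the quotient of $\mathrm{Der}^{SS}\overline A_{H,S}$ by the inner derivations. $\mathrm{Der}^S_s\overline A_{H,S}\subset\mathrm{Der}^{SS}\overline A_{H,S}$ is the Lie subalgebra of semi-special derivations killing $X_s$. *)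

From HB Require Import structures.
From mathcomp Require Import all_boot all_order all_algebra.
Set Implicit Arguments. Unset Strict Implicit. Unset Printing Implicit Defensive.
Import Order.TTheory GRing.Theory Num.Theory.
Local Open Scope ring_scope.

Definition alg_hom (B C : algType rat) (f : B -> C) : Prop :=
  linear f /\ monoid_morphism f.

Definition rel_holds (g : nat) (S : finType) (C : algType rat)
  (p q : 'I_g -> C) (X : S -> C) : Prop :=
  \sum_(i < g) (p i * q i - q i * p i) + \sum_(t : S) X t = 0.

(* (B, p, q, X) is the quotient of the free associative (unital) Q-algebra
   on p_i, q_i (i < g) and X_t (t in S) by the two-sided ideal generated by
   sum_i [p_i,q_i] + sum_t X_t, characterized by its universal property. *)
Definition is_Abar (g : nat) (S : finType) (B : algType rat)
  (p q : 'I_g -> B) (X : S -> B) : Prop :=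
  rel_holds p q X /\
  forall (C : algType rat) (p' q' : 'I_g -> C) (X' : S -> C),
    rel_holds p' q' X' ->
    (exists f : B -> C, alg_hom f /\ (forall i, f (p i) = p' i) /\
        (forall i, f (q i) = q' i) /\ (forall t, f (X t) = X' t)) /\
    (forall f1 f2 : B -> C, alg_hom f1 -> alg_hom f2 ->
        (forall i, f1 (p i) = f2 (p i)) -> (forall i, f1 (q i) = f2 (q i)) ->
        (forall t, f1 (X t) = f2 (X t)) -> forall x, f1 x = f2 x).

Definition is_der (B : algType rat) (D : B -> B) : Prop :=
  linear D /\ forall x y, D (x * y) = D x * y + x * D y.

Definition semi_special (S : finType) (B : algType rat) (X : S -> B)
  (D : B -> B) : Prop :=
  is_der D /\ forall t, exists b, D (X t) = b * X t - X t * b.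

Definition inner_der (B : algType rat) (D : B -> B) : Prop :=
  exists b, forall x, D x = b * x - x * b.

Definition der_S_s (S : finType) (B : algType rat) (X : S -> B) (s : S)
  (D : B -> B) : Prop :=
  semi_special X D /\ D (X s) = 0.

(* Surjectivity is elementary: if D(X_s) = [b, X_s], then D - [b, .] is still semi-special
   and kills X_s.  An inner derivation [b, .] kills X_s iff b commutes with X_s, so the
   kernel statement reduces to: the centralizer of X_s in Abar is Q[X_s] (centralizer_X).

   For this we eliminate one generator X_s0 through the defining relation; Abar is then
   spanned by the words in the remaining letters (induction over the subalgebra they
   generate), and a family of matrix representations by shift operators provides
   coordinate functionals [wcoef] showing that these words are linearly independent.
   Words are totally ordered by an integer code compatible with concatenation, so every
   nonzero element has a leading word and leading words multiply.  If w has a primitive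
   leading word l, the leading word of any b commuting with w commutes with l, hence is
   a power l^k; subtracting a multiple of w^k lowers the leading word, and induction
   gives b in Q[w] (centralizer_poly).  Finally X_s has a primitive leading word: a
   single letter if S has an element s0 <> s, and otherwise (X_s = sum_i [q_i, p_i]) a
   two-letter word; when S = {s} and g = 0 the algebra is just Q. *)

From HB Require Import structures.
From mathcomp Require Import all_boot all_order all_algebra.
From Stdlib Require Import ClassicalEpsilon.
Set Implicit Arguments. Unset Strict Implicit. Unset Printing Implicit Defensive.
Import GRing.Theory.

(* Words over a finite alphabet T are coded by integers in base #|T|+1 with nonzero
   digits, least significant digit first.  The code is injective and monotone in both
   factors of a concatenation; it orders words first by length. *)
Section WordCode.
Variable T : finType.

Definition base : nat := #|T|.+1.
Definition digit (x : T) : nat := (enum_rank x).+1.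
Definition code (w : seq T) : nat := foldr (fun x c => c * base + digit x) 0 w.

Lemma digit_lt x : digit x < base.
Proof. by rewrite ltnS ltn_ord. Qed.

Lemma code_cat u v : code (u ++ v) = code v * base ^ size u + code u.
Proof.
elim: u => [|x u IH] /=; first by rewrite expn0 muln1 addn0.
by rewrite IH mulnDl -mulnA -expnSr addnA.
Qed.

Lemma code_lt w : code w < base ^ size w.
Proof.
elim: w => [|x w IH] //=; rewrite expnSr.
apply: (@leq_trans ((code w).+1 * base)); first by rewrite mulSn addnC ltn_add2r digit_lt.
by rewrite leq_mul2r IH orbT.
Qed.

Lemma code_cons_ge x w : base ^ size w <= code (x :: w).
Proof.
elim: w x => [|y w IH] x /=; first by rewrite expn0 addn_gt0 orbT.
by rewrite expnSr (leq_trans _ (leq_addr _ _)) // leq_mul2r (IH y) orbT.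
Qed.

Lemma code_size u v : code u <= code v -> size u <= size v.
Proof.
case: u => [|x u] // hle; rewrite ltnNge; apply/negP => hvu.
have := leq_trans (code_lt v) (leq_trans (leq_pexp2l (ltn0Sn _) hvu) (code_cons_ge x u)).
by rewrite ltnNge hle.
Qed.

(* Digits are recovered by Euclidean division, so the coding is injective. *)
Lemma code_inj : injective code.
Proof.
elim=> [|x u IH] [|y v] //=; try by rewrite /digit addnS.
move=> e; have := congr1 (modn^~ base) e; have := congr1 (divn^~ base) e.
rewrite /= !divnMDl // !modnMDl !divn_small ?modn_small ?digit_lt // !addn0.
by move=> /IH -> /succn_inj/val_inj/enum_rank_inj ->.
Qed.

Lemma code_cat_le u1 u2 v1 v2 : code u1 <= code v1 -> code u2 <= code v2 ->
  code (u1 ++ u2) <= code (v1 ++ v2).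
Proof.
move=> h1 h2; rewrite !code_cat leq_add // leq_mul // leq_pexp2l //.
exact: code_size.
Qed.

Lemma code_cat_eq u1 u2 v1 v2 : code u1 <= code v1 -> code u2 <= code v2 ->
  code (u1 ++ u2) = code (v1 ++ v2) -> u1 = v1 /\ u2 = v2.
Proof.
move=> h1 h2; rewrite !code_cat => e.
have hm : code u2 * base ^ size u1 <= code v2 * base ^ size v1.
  by rewrite leq_mul // leq_pexp2l // code_size.
have e1 : u1 = v1.
  apply: code_inj; apply/eqP; rewrite eqn_leq h1 leqNgt; apply/negP => hlt.
  by move: (leq_add hm hlt); rewrite addnS e ltnn.
split=> //; apply: code_inj; move/eqP: e; rewrite e1 eqn_add2r eqn_pmul2r ?expn_gt0 //.
by move/eqP.
Qed.

End WordCode.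

Section PrimitiveWords.
Variable T : eqType.

Definition primitive_word (l : seq T) : Prop :=
  l != [::] /\ forall L, 0 < size L < size l -> L ++ l != l ++ L.

(* The only words commuting with a primitive word l are the powers of l: peel off a
   copy of l and recurse. *)
Lemma primitive_commute l L : primitive_word l -> L ++ l = l ++ L ->
  exists k, L = flatten (nseq k l).
Proof.
move=> [nl prim].
elim: {L}(size L).+1 {-2}L (ltnSn (size L)) => // n IH L hL e.
case: (eqVneq L [::]) => [->|nL]; first by exists 0.
case: (ltnP (size L) (size l)) => hs.
  by exfalso; move/eqP: e; apply/negP/prim; rewrite hs andbT lt0n size_eq0.
have tl : take (size l) L = l.
  by have := congr1 (take (size l)) e; rewrite takel_cat // take_size_cat.
set L' := drop (size l) L.
have eL : L = l ++ L' by rewrite -{1}(cat_take_drop (size l) L) tl.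
have e' : L' ++ l = l ++ L'.
  by move: e; rewrite eL -catA => /eqP; rewrite eqseq_cat // => /andP [_ /eqP].
have [|k ek] := IH L' _ e'; last by exists k.+1; rewrite eL ek.
move: hL; rewrite eL size_cat ltnS; apply: leq_trans.
by rewrite -{1}(add0n (size L')) ltn_add2r lt0n size_eq0.
Qed.

Lemma primitive_letter (x : T) : primitive_word [:: x].
Proof. by split=> // -[|y L] //=; rewrite ltnS ltn0. Qed.

Lemma primitive_pair (x y : T) : x != y -> primitive_word [:: x; y].
Proof.
move=> nxy; split=> // -[|z [|z' L]] //= _.
by apply: contra nxy => /eqP [_ -> _].
Qed.

End PrimitiveWords.

Local Open Scope ring_scope.

Lemma sum_neq0 (V : nmodType) (I : eqType) (r : seq I) (F : I -> V) :
  \sum_(i <- r) F i != 0 -> exists2 i, i \in r & F i != 0.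
Proof.
move=> nz; apply/hasP; apply: contraNT nz => /hasPn h.
by rewrite big1_seq // => i /andP [_ /h]; rewrite negbK => /eqP.
Qed.

Lemma seq_argmax (T : eqType) (f : T -> nat) (s : seq T) : s != [::] ->
  exists2 x, x \in s & forall y, y \in s -> (f y <= f x)%N.
Proof.
elim: s => [|x s IH] // _; case: (eqVneq s [::]) => [->|/IH [y ys hy]].
  by exists x; rewrite ?mem_head // => y; rewrite inE => /eqP ->.
case: (leqP (f x) (f y)) => hxy.
  by exists y => [|z]; rewrite inE ?ys ?orbT // => /orP [/eqP ->|/hy].
exists x => [|z]; rewrite ?mem_head // inE => /orP [/eqP ->//|/hy hz].
exact: leq_trans hz (ltnW hxy).
Qed.

Definition pbool (Q : Prop) : bool :=
  if excluded_middle_informative Q then true else false.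

Lemma pboolP (Q : Prop) : reflect Q (pbool Q).
Proof. by rewrite /pbool; case: excluded_middle_informative => h; constructor. Qed.

Section AlgHom.
Variables (A C : algType rat) (f : A -> C).
Hypothesis hf : alg_hom f.

Lemma alg_homD x y : f (x + y) = f x + f y.
Proof. by have := hf.1 1 x y; rewrite !scale1r. Qed.

Lemma alg_hom0 : f 0 = 0.
Proof. by apply: (addrI (f 0)); rewrite -alg_homD !addr0. Qed.

Lemma alg_homZ a x : f (a *: x) = a *: f x.
Proof. by have := hf.1 a x 0; rewrite !addr0 alg_hom0 addr0. Qed.

Lemma alg_hom_sum (I : Type) (r : seq I) (P : pred I) (F : I -> A) :
  f (\sum_(i <- r | P i) F i) = \sum_(i <- r | P i) f (F i).
Proof. exact: (big_morph f alg_homD alg_hom0). Qed.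

Lemma alg_hom_prod (I : Type) (r : seq I) (F : I -> A) :
  f (\prod_(i <- r) F i) = \prod_(i <- r) f (F i).
Proof. exact: (big_morph f hf.2.2 hf.2.1). Qed.

End AlgHom.

Lemma alg_hom_comp (A B C : algType rat) (f : A -> B) (h : B -> C) :
  alg_hom f -> alg_hom h -> alg_hom (h \o f).
Proof.
move=> hf hh; split; first by move=> a x y /=; rewrite hf.1 hh.1.
by split=> [|x y] /=; rewrite ?hf.2.1 ?hh.2.1 // hf.2.2 hh.2.2.
Qed.

Section SubalgebraInduction.
Variables (B : algType rat) (P : pred B).
Hypothesis P_closed : GRing.subsemialg_closed P.

HB.instance Definition _ := GRing.isSubalgClosed.Build rat B P P_closed.
Definition subalg : Type := {x : B | P x}.
HB.instance Definition _ := [isSub of subalg for (@sval B P)].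
HB.instance Definition _ := [Choice of subalg by <:].
HB.instance Definition _ := [SubChoice_isSubAlgebra of subalg by <:].

(* The universal property maps Abar into the subalgebra; composed with the inclusion it
   agrees with the identity on the generators, hence everywhere by uniqueness. *)
Lemma abar_ind (g : nat) (S : finType) (p q : 'I_g -> B) (X : S -> B) :
  is_Abar p q X ->
  (forall i, P (p i)) -> (forall i, P (q i)) -> (forall t, P (X t)) -> forall x, P x.
Proof.
move=> HB Pp Pq PX x.
pose p' i : subalg := Sub (p i) (Pp i).
pose q' i : subalg := Sub (q i) (Pq i).
pose X' t : subalg := Sub (X t) (PX t).
have val_hom : alg_hom (val : subalg -> B) by [].
have rel' : rel_holds p' q' X'.
  apply: val_inj; rewrite (alg_homD val_hom) !(alg_hom_sum val_hom) (alg_hom0 val_hom).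
  by apply: etrans HB.1; congr (_ + _).
have [[f [hf [fp [fq fX]]]] _] := HB.2 subalg p' q' X' rel'.
suff <- : (val \o f) x = x by exact: valP.
apply: ((HB.2 B p q X HB.1).2 (val \o f) id) => // [|i|i|t] /=.
- exact: alg_hom_comp hf val_hom.
- by rewrite fp.
- by rewrite fq.
- by rewrite fX.
Qed.

End SubalgebraInduction.

(* Solving the defining relation for one generator X_s0: any values of p, q and of the
   X_t with t <> s0 extend uniquely to a solution of the relation. *)
Section EliminateGenerator.
Variables (g : nat) (S : finType) (s0 : S) (C : algType rat) (P Q : 'I_g -> C).

Definition extend_X (Y : {t : S | t != s0} -> C) (t : S) : C :=
  if insub t is Some t' then Y t'
  else - (\sum_(i < g) (P i * Q i - Q i * P i) + \sum_t' Y t').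

Lemma sum_split_at (F : S -> C) :
  \sum_(t : S) F t = F s0 + \sum_(t' : {t : S | t != s0}) F (val t').
Proof.
rewrite (bigD1 s0) //=; congr (_ + _).
rewrite (reindex_omap (val : {t : S | t != s0} -> S) insub); last first.
  by move=> t ht; rewrite insubT.
by apply: eq_bigl => t; rewrite (valP t) valK eqxx.
Qed.

Lemma rel_extend_X Y : rel_holds P Q (extend_X Y).
Proof.
rewrite /rel_holds sum_split_at.
have -> : \sum_(t' : {t : S | t != s0}) extend_X Y (val t') = \sum_t' Y t'.
  by apply: eq_bigr => t' _; rewrite /extend_X valK.
by rewrite /extend_X insubF ?eqxx // opprD !addrA subrr add0r addNr.
Qed.

Lemma extend_X_eq X : rel_holds P Q X -> X =1 extend_X (fun t' => X (val t')).
Proof.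
move=> hrel t; rewrite /extend_X; case: insubP => [t' _ <- //|].
rewrite negbK => /eqP ->; apply/eqP; rewrite -addr_eq0.
by move: hrel; rewrite /rel_holds sum_split_at addrCA => ->.
Qed.

End EliminateGenerator.

(* Abar is free on the letters p_i, q_i and X_t, t <> s0: the words in these letters
   form a basis, with coordinate functionals wcoef. *)
Section FreeBasis.
Variables (g : nat) (S : finType) (B : algType rat) (p q : 'I_g -> B) (X : S -> B).
Hypothesis HB : is_Abar p q X.
Variable s0 : S.

Local Notation letter := ('I_g + 'I_g + {t : S | t != s0})%type.

Definition gen (x : letter) : B :=
  match x with inl (inl i) => p i | inl (inr i) => q i | inr t => X (val t) end.

Definition word (w : seq letter) : B := \prod_(x <- w) gen x.

Lemma word_cat u v : word (u ++ v) = word u * word v.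
Proof. exact: big_cat. Qed.

(* The letter x acts on Q^(n+1) by sending the basis vector e_j to e_(j * base + digit x)
   (or to 0 when out of range), so that a word w sends e_0 to e_(code w). *)
Definition shift (n : nat) (x : letter) : 'M[rat]_n.+1 :=
  \matrix_(i, j) ((i : nat) == j * base letter + digit x)%N%:R.

Lemma psi_exists n :
  {f : B -> 'M[rat]_n.+1 | alg_hom f /\ forall x, f (gen x) = shift n x}.
Proof.
apply: constructive_indefinite_description.
have [[f [hf [fp [fq fX]]]] _] := HB.2 _ _ _ _ (rel_extend_X
  (fun i => shift n (inl (inl i))) (fun i => shift n (inl (inr i)))
  (fun t => shift n (inr t))).
by exists f; split=> // -[[i|i]|t] /=; rewrite ?fp ?fq // fX /extend_X valK.
Qed.

Definition psi n : B -> 'M[rat]_n.+1 := sval (psi_exists n).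

Lemma psi_hom n : alg_hom (psi n).
Proof. exact: (svalP (psi_exists n)).1. Qed.

Lemma psi_gen n x : psi n (gen x) = shift n x.
Proof. exact: (svalP (psi_exists n)).2. Qed.

Lemma psi_word n w (i : 'I_n.+1) :
  psi n (word w) i ord0 = ((i : nat) == code w)%:R.
Proof.
rewrite /word (alg_hom_prod (psi_hom n)).
elim: w i => [|x w IH] i; first by rewrite big_nil mxE.
rewrite big_cons psi_gen; set M := \prod_(_ <- w) _ in IH *.
rewrite -mulmxE mxE.
under eq_bigr => j _ do rewrite IH mxE.
case: (ltnP (code w) n.+1) => [hw|hw].
  rewrite (bigD1 (Ordinal hw)) //= eqxx mulr1 big1 ?addr0 // => j hj.
  suff /negPf -> : (j : nat) != code w by rewrite mulr0.
  by apply: contra hj => /eqP e; apply/eqP/val_inj.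
rewrite big1 => [|j _]; last first.
  by rewrite (ltn_eqF (leq_trans (ltn_ord j) hw)) mulr0.
suff /ltn_eqF -> : ((i : nat) < code (x :: w))%N by [].
apply: leq_trans (ltn_ord i) (leq_trans hw _).
by rewrite /= (leq_trans _ (leq_addr _ _)) // leq_pmulr.
Qed.

(* The coefficient of the word u in b, read off from the representation psi (code u). *)
Definition wcoef (b : B) (u : seq letter) : rat :=
  psi (code u) b (inord (code u)) ord0.

(* Distinct words have distinct coordinates: the words are linearly independent. *)
Lemma wcoef_word w u : wcoef (word w) u = (u == w)%:R.
Proof. by rewrite /wcoef psi_word inordK // (inj_eq (@code_inj _)). Qed.

Lemma wcoefD b c u : wcoef (b + c) u = wcoef b u + wcoef c u.
Proof. by rewrite /wcoef (alg_homD (psi_hom _)) mxE. Qed.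

Lemma wcoefZ a b u : wcoef (a *: b) u = a * wcoef b u.
Proof. by rewrite /wcoef (alg_homZ (psi_hom _)) mxE. Qed.

Lemma wcoef0 u : wcoef 0 u = 0.
Proof. by rewrite /wcoef (alg_hom0 (psi_hom _)) mxE. Qed.

Lemma wcoefB b c u : wcoef (b - c) u = wcoef b u - wcoef c u.
Proof. by rewrite wcoefD -scaleN1r wcoefZ mulN1r. Qed.

Lemma wcoef_sum (I : Type) (r : seq I) (P : pred I) (F : I -> B) u :
  wcoef (\sum_(i <- r | P i) F i) u = \sum_(i <- r | P i) wcoef (F i) u.
Proof. exact: (big_morph (wcoef^~ u) (fun b c => wcoefD b c u) (wcoef0 u)). Qed.

Definition lincomb (r : seq (rat * seq letter)) : B := \sum_(e <- r) e.1 *: word e.2.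

Definition spanned (b : B) : Prop := exists r, b = lincomb r.

Lemma spanned_word w : spanned (word w).
Proof. by exists [:: (1, w)]; rewrite /lincomb big_seq1 scale1r. Qed.

Lemma spannedD b c : spanned b -> spanned c -> spanned (b + c).
Proof. by move=> [r1 ->] [r2 ->]; exists (r1 ++ r2); rewrite /lincomb big_cat. Qed.

Lemma spannedZ a b : spanned b -> spanned (a *: b).
Proof.
move=> [r ->]; exists [seq (a * e.1, e.2) | e <- r].
by rewrite /lincomb big_map scaler_sumr; apply: eq_bigr => e _; rewrite scalerA.
Qed.

Lemma spannedM b c : spanned b -> spanned c -> spanned (b * c).
Proof.
move=> [r1 ->] [r2 ->]; exists [seq (e1.1 * e2.1, e1.2 ++ e2.2) | e1 <- r1, e2 <- r2].
rewrite /lincomb big_allpairs_dep mulr_suml; apply: eq_bigr => e1 _.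
rewrite mulr_sumr; apply: eq_bigr => e2 _ /=.
by rewrite word_cat -scalerAl -scalerAr scalerA.
Qed.

Lemma spanned_sum (I : Type) (r : seq I) (P : pred I) (F : I -> B) :
  (forall i, spanned (F i)) -> spanned (\sum_(i <- r | P i) F i).
Proof.
move=> hF; elim/big_ind: _ => //; last exact: spannedD.
by exists [::]; rewrite /lincomb big_nil.
Qed.

(* Every element is a linear combination of words: the generators are, X_s0 being
   expressed through the defining relation. *)
Lemma spanned_all b : spanned b.
Proof.
have P_closed : GRing.subsemialg_closed (fun b => pbool (spanned b)).
  split; [apply/pboolP | split | |].
  - by exists [:: (1, [::])]; rewrite /lincomb big_seq1 scale1r /word big_nil.
  - by apply/pboolP; exists [::]; rewrite /lincomb big_nil.
  - by move=> x y /pboolP hx /pboolP hy; apply/pboolP/spannedD.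
  - by move=> a x /pboolP hx; apply/pboolP/spannedZ.
  - by move=> x y /pboolP hx /pboolP hy; apply/pboolP/spannedM.
have spanned_gen x : spanned (gen x).
  by have := spanned_word [:: x]; rewrite /word big_seq1.
have spanned_p i : spanned (p i) := spanned_gen (inl (inl i)).
have spanned_q i : spanned (q i) := spanned_gen (inl (inr i)).
apply/pboolP; apply: (abar_ind P_closed HB) => [i|i|t]; apply/pboolP => //.
rewrite (extend_X_eq s0 HB.1) /extend_X; case: insubP => [t' _ _|_].
  exact: (spanned_gen (inr t')).
rewrite -scaleN1r; apply/spannedZ/spannedD; apply: spanned_sum.
  by move=> i; rewrite -scaleN1r; apply/spannedD/spannedZ; apply: spannedM.
by move=> t'; exact: (spanned_gen (inr t')).
Qed.

Lemma wcoef_lincomb r u : wcoef (lincomb r) u = \sum_(e <- r) e.1 * (u == e.2)%:R.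
Proof. by rewrite wcoef_sum; apply: eq_bigr => e _; rewrite wcoefZ wcoef_word. Qed.

Lemma expand b : exists U : seq (seq letter),
  [/\ uniq U, (forall u, wcoef b u != 0 -> u \in U)
    & b = \sum_(u <- U) wcoef b u *: word u].
Proof.
have [r ->] := spanned_all b; exists (undup (map snd r)); split.
- exact: undup_uniq.
- move=> u; rewrite wcoef_lincomb mem_undup => /sum_neq0 [e er].
  by case: (eqVneq u e.2) => [-> _|_]; [rewrite map_f | rewrite mulr0 eqxx].
under [RHS]eq_bigr => u _ do rewrite wcoef_lincomb scaler_suml.
rewrite exchange_big; apply: eq_big_seq => e er /=.
rewrite (bigD1_seq e.2) ?undup_uniq ?mem_undup ?map_f //= eqxx mulr1 big1 ?addr0 //.
by move=> u /negPf ->; rewrite mulr0 scale0r.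
Qed.

Lemma wcoef_inj b : (forall u, wcoef b u = 0) -> b = 0.
Proof.
move=> h; have [U [_ _ ->]] := expand b.
by rewrite big1 // => u _; rewrite h scale0r.
Qed.

Lemma wcoef_mul b c U1 U2 u :
  b = \sum_(u1 <- U1) wcoef b u1 *: word u1 ->
  c = \sum_(u2 <- U2) wcoef c u2 *: word u2 ->
  wcoef (b * c) u =
  \sum_(u1 <- U1) \sum_(u2 <- U2) wcoef b u1 * wcoef c u2 * (u == u1 ++ u2)%:R.
Proof.
move=> eb ec; rewrite {1}eb {1}ec mulr_suml wcoef_sum; apply: eq_bigr => u1 _.
rewrite mulr_sumr wcoef_sum; apply: eq_bigr => u2 _.
by rewrite -scalerAl -scalerAr scalerA -word_cat wcoefZ wcoef_word.
Qed.

Definition lead_word (b : B) (L : seq letter) : Prop :=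
  wcoef b L != 0 /\ forall u, wcoef b u != 0 -> (code u <= code L)%N.

Lemma lead_word_uniq b L1 L2 : lead_word b L1 -> lead_word b L2 -> L1 = L2.
Proof.
move=> [n1 h1] [n2 h2]; apply: code_inj; apply/eqP.
by rewrite eqn_leq h2 ?h1.
Qed.

Lemma lead_word_exists b : b != 0 -> exists L, lead_word b L.
Proof.
move=> nb; have [U [_ sU _]] := expand b.
have [|L] := seq_argmax (@code _) (s := [seq u <- U | wcoef b u != 0]).
  apply: contra nb => /eqP supp0; apply/eqP/wcoef_inj => u.
  apply/eqP; apply: contraT => nz.
  have : u \in [seq u <- U | wcoef b u != 0] by rewrite mem_filter nz sU.
  by rewrite supp0.
rewrite mem_filter => /andP [nL _] hL; exists L; split=> // u nz.
by apply: hL; rewrite mem_filter nz sU.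
Qed.

Lemma lead_word_word w : lead_word (word w) w.
Proof.
split=> [|u]; first by rewrite wcoef_word eqxx oner_neq0.
by rewrite wcoef_word; case: (eqVneq u w) => [->|_]; rewrite ?eqxx.
Qed.

Lemma lead_wordM b c Lb Lc : lead_word b Lb -> lead_word c Lc ->
  lead_word (b * c) (Lb ++ Lc) /\ wcoef (b * c) (Lb ++ Lc) = wcoef b Lb * wcoef c Lc.
Proof.
move=> [nb hb] [nc hc].
have [U1 [uU1 sU1 eU1]] := expand b; have [U2 [uU2 sU2 eU2]] := expand c.
have lead_term u1 u2 :
    wcoef b u1 * wcoef c u2 * (Lb ++ Lc == u1 ++ u2)%:R != 0 -> u1 = Lb /\ u2 = Lc.
  case: (eqVneq (Lb ++ Lc) (u1 ++ u2)) => [e|_]; last by rewrite mulr0 eqxx.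
  rewrite mulr1 mulf_eq0 negb_or => /andP [n1 n2].
  by have [-> ->] := code_cat_eq (hb _ n1) (hc _ n2) (congr1 (@code _) (esym e)).
have coef_lead : wcoef (b * c) (Lb ++ Lc) = wcoef b Lb * wcoef c Lc.
  rewrite (wcoef_mul _ eU1 eU2) (bigD1_seq Lb) ?sU1 //= (bigD1_seq Lc) ?sU2 //=.
  rewrite eqxx mulr1 !big1 ?addr0 // => [u1 ne1|u2 ne2].
    apply: big1 => u2 _; apply/eqP; apply: contraT => /lead_term [e1 _].
    by rewrite e1 eqxx in ne1.
  by apply/eqP; apply: contraT => /lead_term [_ e2]; rewrite e2 eqxx in ne2.
split=> //; split=> [|u]; first by rewrite coef_lead mulf_neq0.
rewrite (wcoef_mul _ eU1 eU2) => /sum_neq0 [u1 _] /sum_neq0 [u2 _].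
case: (eqVneq u (u1 ++ u2)) => [->|_]; last by rewrite mulr0 eqxx.
rewrite mulr1 mulf_eq0 negb_or => /andP [n1 n2].
exact: code_cat_le (hb _ n1) (hc _ n2).
Qed.

Lemma lead_wordX w l k : lead_word w l ->
  lead_word (w ^+ k) (flatten (nseq k l)) /\
  wcoef (w ^+ k) (flatten (nseq k l)) = wcoef w l ^+ k.
Proof.
move=> hw; elim: k => [|k [IH1 IH2]].
  have -> : w ^+ 0 = word [::] by rewrite expr0 /word big_nil.
  by rewrite wcoef_word eqxx; split=> //; apply: lead_word_word.
have [h1 h2] := lead_wordM hw IH1.
by rewrite exprS /=; split=> //; rewrite h2 IH2 exprS.
Qed.

(* The centralizer of an element with a primitive leading word l is Q[w]: the leading
   word of b commutes with l, hence is some l^k, and subtracting the multiple of w^k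
   with the same leading coefficient decreases the codes of the support of b. *)
Lemma centralizer_poly w l : lead_word w l -> primitive_word l ->
  forall b, b * w = w * b -> exists P : {poly rat}, b = horner_alg w P.
Proof.
move=> hw hl; suff bounded n b : (forall u, wcoef b u != 0 -> (code u < n)%N) ->
    b * w = w * b -> exists P : {poly rat}, b = horner_alg w P.
  move=> b; have [U [_ sU _]] := expand b; apply: (bounded (\max_(u <- U) code u).+1).
  by move=> u /sU uU; rewrite ltnS leq_bigmax_seq.
elim: n b => [|n IH] b hb cb.
  exists 0; rewrite rmorph0; apply: wcoef_inj => u.
  by apply/eqP; apply: contraT => /hb.
case: (eqVneq b 0) => [->|nb]; first by exists 0; rewrite rmorph0.
have [L hL] := lead_word_exists nb.
have [k eL] : exists k, L = flatten (nseq k l).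
  apply: (primitive_commute hl); apply: (lead_word_uniq (b := b * w)).
    exact: (lead_wordM hL hw).1.
  by rewrite cb; exact: (lead_wordM hw hL).1.
have [lead_wk coef_wk] := lead_wordX k hw; rewrite -eL in lead_wk coef_wk.
have nz_wk : wcoef w l ^+ k != 0 by rewrite expf_neq0 //; case: hw.
pose a := wcoef b L / wcoef w l ^+ k.
have [P eP] : exists P : {poly rat}, b - a *: w ^+ k = horner_alg w P.
  apply: IH; last by rewrite mulrBl mulrBr cb -scalerAl -scalerAr -exprS -exprSr.
  move=> u; rewrite wcoefB wcoefZ => nz.
  have u_le_L : (code u <= code L)%N.
    case: (eqVneq (wcoef b u) 0) => [bu0|]; last exact: hL.2.
    by apply: lead_wk.2; apply: contra nz; rewrite bu0 => /eqP ->; rewrite mulr0 subr0.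
  have u_neq_L : u != L.
    by apply: contra nz => /eqP ->; rewrite coef_wk /a mulfVK // subrr.
  rewrite -ltnS (leq_trans _ (hb _ hL.1)) // ltnS ltn_neqAle u_le_L andbT.
  by rewrite (inj_eq (@code_inj _)).
exists (P + a *: 'X^k); rewrite rmorphD -mul_polyC rmorphM /= horner_algC.
by rewrite rmorphXn /= (horner_algX w) mulr_algl -eP subrK.
Qed.

Lemma scalar_of_no_letters : (letter -> False) -> forall b : B, exists c : rat, b = c%:A.
Proof.
move=> no_letter b; have [U [_ _ ->]] := expand b.
exists (\sum_(u <- U) wcoef b u); rewrite scaler_suml; apply: eq_bigr => u _.
by case: u => [|x]; [rewrite /word big_nil | case: (no_letter x)].
Qed.

(* For g > 0 the element sum_i [q_i, p_i] has a primitive leading word: it is nonzero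
   (the word q_0 p_0 occurs with coefficient 1) and all its words consist of two
   distinct letters. *)
Lemma lead_commutators : (0 < g)%N ->
  exists2 L, lead_word (\sum_(i < g) (q i * p i - p i * q i)) L & primitive_word L.
Proof.
move=> g_gt0; pose i0 := Ordinal g_gt0.
pose qp i : seq letter := [:: inl (inr i); inl (inl i)].
pose pq i : seq letter := [:: inl (inl i); inl (inr i)].
have -> : \sum_(i < g) (q i * p i - p i * q i) = \sum_(i < g) (word (qp i) - word (pq i)).
  by apply: eq_bigr => i _; rewrite /word !big_cons big_nil !mulr1.
set b := \sum_(i < g) _.
have coef_b u : wcoef b u = \sum_(i < g) ((u == qp i)%:R - (u == pq i)%:R).
  by rewrite wcoef_sum; apply: eq_bigr => i _; rewrite wcoefB !wcoef_word.
have [|L hL] := lead_word_exists (b := b).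
  apply/eqP => /(congr1 (wcoef^~ (qp i0))); rewrite coef_b wcoef0 (bigD1 i0) //=.
  rewrite big1 => [|i ne]; first by rewrite subr0 addr0 => /eqP; rewrite oner_eq0.
  suff /negPf -> : qp i0 != qp i by rewrite subr0.
  by apply: contra ne => /eqP [-> _].
exists L => //; move: hL.1; rewrite coef_b => /sum_neq0 [i _].
case: (eqVneq L (qp i)) => [-> _|_]; first exact: primitive_pair.
case: (eqVneq L (pq i)) => [-> _|_]; first exact: primitive_pair.
by rewrite subrr eqxx.
Qed.

End FreeBasis.

Lemma centralizer_X (g : nat) (S : finType) (B : algType rat)
    (p q : 'I_g -> B) (X : S -> B) (HB : is_Abar p q X) (s : S) (b : B) :
  b * X s = X s * b -> exists P : {poly rat}, b = horner_alg (X s) P.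
Proof.
move=> cb; case: (pickP (fun t => t != s)) => [s0 s0_neq_s|only_s].
  have s_neq_s0 : s != s0 by rewrite eq_sym.
  have eX : X s = word p q X [:: inr (Sub s s_neq_s0)] by rewrite /word big_seq1.
  apply: (centralizer_poly (HB := HB) (l := [:: inr (Sub s s_neq_s0)])) => //.
    by rewrite eX; apply: lead_word_word.
  exact: primitive_letter.
have no_other (t' : {t : S | t != s}) : False by have := valP t'; rewrite only_s.
have eX : X s = \sum_(i < g) (q i * p i - p i * q i).
  rewrite (extend_X_eq s HB.1) /extend_X insubF ?eqxx //.
  rewrite [X in _ + X]big1 => [|t' _]; last by case: (no_other t').
  by rewrite addr0 -sumrN; apply: eq_bigr => i _; rewrite opprB.
case: (posnP g) => [g0|g_gt0].
  have no_letter : ('I_g + 'I_g + {t : S | t != s})%type -> False.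
    by case=> [[i|i]|t']; [have := ltn_ord i | have := ltn_ord i | case: (no_other t')];
      rewrite [X in (_ < X)%N]g0.
  by have [c ->] := scalar_of_no_letters HB no_letter b; exists c%:P; rewrite horner_algC.
have [L hL prim_L] := lead_commutators HB s g_gt0.
by rewrite eX in cb *; apply: (centralizer_poly hL prim_L).
Qed.

Section Derivations.
Variable B : algType rat.

Lemma inner_is_der (b : B) : is_der (fun x => b * x - x * b).
Proof.
split=> [a x y|x y]; first by rewrite scalerBr scalerAr scalerAl mulrDr mulrDl opprD addrACA.
by rewrite mulrBl mulrBr !mulrA addrA subrK.
Qed.

Lemma is_der_sub (D E : B -> B) : is_der D -> is_der E -> is_der (fun x => D x - E x).
Proof.
move=> [lD dD] [lE dE]; split=> [a x y|x y].
  by rewrite lD lE opprD addrACA scalerBr.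
by rewrite dD dE opprD addrACA mulrBl mulrBr.
Qed.

Lemma commutator_lincomb (I : Type) (r : seq I) (c : I -> rat) (y : I -> B) (x : B) :
  (\sum_(i <- r) c i *: y i) * x - x * (\sum_(i <- r) c i *: y i) =
  \sum_(i <- r) c i *: (y i * x - x * y i).
Proof.
rewrite mulr_suml mulr_sumr -sumrB; apply: eq_bigr => i _.
by rewrite scalerBr scalerAl scalerAr.
Qed.

Lemma horner_alg_sum (w : B) (P : {poly rat}) :
  horner_alg w P = \sum_(n < size P) P`_n *: w ^+ n.
Proof.
rewrite -{1}[P]coefK poly_def linear_sum; apply: eq_bigr => n _.
by rewrite linearZ /= rmorphXn /= horner_algX mulr_algl.
Qed.

(* Every semi-special derivation is congruent modulo inner derivations to one killing
   X_s: subtract [b, .] where D(X_s) = [b, X_s]. *)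
Lemma normalize_semi_special (S : finType) (X : S -> B) (s : S) (D : B -> B) :
  semi_special X D -> exists D0, der_S_s X s D0 /\ inner_der (fun x => D x - D0 x).
Proof.
move=> [derD hD]; have [b hb] := hD s.
exists (fun x => D x - (b * x - x * b)); split; last first.
  by exists b => x; rewrite opprB addrC subrK.
split; last by rewrite hb subrr.
split; first exact: is_der_sub derD (inner_is_der b).
move=> t; have [bt hbt] := hD t; exists (bt - b).
by rewrite hbt mulrBl mulrBr !opprB addrACA [RHS]addrACA (addrC (- (b * X t))).
Qed.

End Derivations.

Unset Implicit Arguments.
Theorem lemma7p6 (g : nat) (S : finType) (B : algType rat)
  (p q : 'I_g -> B) (X : S -> B) (HB : is_Abar p q X) (s : S) :
  (* surjectivity of Der^S_s -> ODer^SS *)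
  (forall D : B -> B, semi_special X D ->
     exists D0 : B -> B, der_S_s X s D0 /\ inner_der (fun x => D x - D0 x)) /\
  (* kernel = span of the inner derivations [X_s^n, .], n >= 0 *)
  (forall D0 : B -> B, der_S_s X s D0 ->
     (inner_der D0 <->
      exists (N : nat) (c : 'I_N -> rat), forall x,
        D0 x = \sum_(n < N) c n *: (X s ^+ n * x - x * X s ^+ n))).
Proof.
split=> [D|D0 [_ D0_Xs]]; first exact: normalize_semi_special.
split=> [[b hb]|[N [c hc]]].
  have b_comm_Xs : b * X s = X s * b by apply/eqP; rewrite -subr_eq0 -hb D0_Xs.
  have [P eP] := centralizer_X HB b_comm_Xs.
  by exists (size P), (fun n => P`_n) => x; rewrite hb eP horner_alg_sum commutator_lincomb.
by exists (\sum_(n < N) c n *: X s ^+ n) => x; rewrite commutator_lincomb hc.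
Qed.
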